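(* Let $k \geq 2$ be an integer. For integers $d, i, u$ with $1 \le d \le k$ and $0 \le u \le k$, let $$D(d,i,u) = \frac{\binom{u}{i}\binom{k-u}{d-i}}{\binom{k}{d}},$$ with the convention that a binomial coefficient $\binom{n}{m}$ is $0$ when $m<0$ or $m>n$. Then for all integers $d$ with $1 \le d \le k-1$ and all $u$ with $0 \le u \le k$ and $u \le \frac{k+1}{d+1}$, we have $$D(d+1,i,u) \ge D(d,i,u) \quad \text{for every integer } i > 0 .$$ In words, the utility degree distribution of degree $d+1$ dominates that of degree $d$ on all nonzero utility degrees.
   Context: Setting: LT codes with $k$ input symbols. An output symbol of degree $d$ is the XOR of $d$ distinct input symbols (its neighbors) chosen uniformly at random. At some moment of decoding, $u$ input symbols are still unsolved. The utility degree of a received output symbol is the number of its neighbors that are still unsolved. Thus $D(d,i,u)$ is the probability that an output symbol of degree $d$ has utility degree $i$ when $u$ input symbols are unsolved (a hypergeometric distribution, nonzero only for $\max(0,d-k+u) \le i \le \min(d,u)$). *)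

From mathcomp Require Import all_boot all_order all_algebra.
Set Implicit Arguments. Unset Strict Implicit. Unset Printing Implicit Defensive.
Import Order.TTheory GRing.Theory Num.Theory.
Local Open Scope ring_scope.

Definition binz (n m : int) : nat :=
  match n, m with
  | Posz n', Posz m' => 'C(n', m')
  | _, _ => 0%N
  end.

Definition Dutil (R : fieldType) (k : nat) (d i u : int) : R :=
  (binz u i)%:R * (binz (k%:Z - u) (d - i))%:R / (binz k%:Z d)%:R.

From mathcomp Require Import all_boot all_order all_algebra.
From mathcomp Require Import zify ring.
Import Order.TTheory GRing.Theory Num.Theory.
Local Open Scope ring_scope.

(* With j = d - i, the quotient D(d+1,i,u) / D(d,i,u) equals
   ((k-u-j)/(j+1)) * ((d+1)/(k-d)), obtained from the successor ratios
   C(m,j+1)/C(m,j) = (m-j)/(j+1) and C(k,d+1)/C(k,d) = (k-d)/(d+1).  It is at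
   least 1 because (d+1)(k-u-j) - (j+1)(k-d) = i(k+1) - u(d+1), which is
   nonnegative once i >= 1 and u(d+1) <= k+1.  For i > d the
   degree-d probability vanishes. *)

Lemma binzN (n : int) (m : nat) : binz n (Negz m) = 0%N.
Proof. by case: n. Qed.

Lemma leq_mul_bin_succ (m j k d : nat) :
  (j.+1 * (k - d) <= d.+1 * (m - j))%N ->
  ('C(m, j) * 'C(k, d.+1) <= 'C(m, j.+1) * 'C(k, d))%N.
Proof.
move=> ratio_le.
rewrite -(@leq_pmul2l (d.+1 * j.+1)) ?muln_gt0 //.
have -> : (d.+1 * j.+1 * ('C(m, j) * 'C(k, d.+1))
           = j.+1 * 'C(m, j) * (d.+1 * 'C(k, d.+1)))%N by ring.
have -> : (d.+1 * j.+1 * ('C(m, j.+1) * 'C(k, d))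
           = d.+1 * 'C(k, d) * (j.+1 * 'C(m, j.+1)))%N by ring.
rewrite !mul_bin_left.
have -> : (j.+1 * 'C(m, j) * ((k - d) * 'C(k, d))
           = j.+1 * (k - d) * ('C(m, j) * 'C(k, d)))%N by ring.
have -> : (d.+1 * 'C(k, d) * ((m - j) * 'C(m, j))
           = d.+1 * (m - j) * ('C(m, j) * 'C(k, d)))%N by ring.
by rewrite leq_mul2r ratio_le orbT.
Qed.

Lemma utility_ratio_ge1 (k d u i : nat) :
  (0 < i <= d)%N -> (d < k)%N -> (u * d.+1 <= k.+1)%N ->
  ((d - i).+1 * (k - d) <= d.+1 * (k - u - (d - i)))%N.
Proof. move=> *; nia. Qed.

Lemma Dutil_le_succ (R : realFieldType) (k d u i : nat) :
  (0 < i)%N -> (d < k)%N -> (u <= k)%N -> (u * d.+1 <= k.+1)%N ->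
  Dutil R k d i u <= Dutil R k d.+1 i u.
Proof.
move=> i_gt0 d_lt_k u_le_k ud_le.
have [i_le_d | d_lt_i] := leqP i d; rewrite /Dutil; last first.
  have -> : d%:Z - i%:Z = Negz (i - d).-1 by rewrite NegzE prednK ?subn_gt0 //; lia.
  by rewrite binzN mulr0 mul0r divr_ge0 ?mulr_ge0 ?ler0n.
have -> : k%:Z - u%:Z = (k - u)%N by lia.
have -> : d%:Z - i%:Z = (d - i)%N by lia.
have -> : d.+1%:Z - i%:Z = (d - i).+1 by lia.
have Ckd_gt0 : 0 < 'C(k, d)%:R :> R by rewrite ltr0n bin_gt0 ltnW.
have Ckd1_gt0 : 0 < 'C(k, d.+1)%:R :> R by rewrite ltr0n bin_gt0.
rewrite /= ler_pdivrMr // mulrAC ler_pdivlMr // -!natrM ler_nat.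
rewrite -!mulnA leq_mul2l leq_mul_bin_succ ?orbT //.
by apply: utility_ratio_ge1; rewrite ?i_gt0.
Qed.

Theorem mainTheorem1 (R : realFieldType) (k : nat) (d u : int) :
  (2 <= k)%N ->
  1 <= d -> d <= k%:Z - 1 ->
  0 <= u -> u <= k%:Z ->
  (u%:~R : R) <= (k%:R + 1) / (d%:~R + 1) ->
  forall i : int, 0 < i ->
    Dutil R k d i u <= Dutil R k (d + 1) i u.
Proof.
case: d => [d|d] //; case: u => [u|u] // _ _ d_le_k _ u_le_k u_le [i|i] // i_gt0.
have ud_le : (u * d.+1 <= k.+1)%N.
  move: u_le; rewrite ler_pdivlMr; last by rewrite ltr_pwDr // ler0z.
  by rewrite !pmulrn !natr1 -natrM ler_nat.
have d_lt_k : (d < k)%N by lia.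
by have := @Dutil_le_succ R k d u i i_gt0 d_lt_k u_le_k ud_le; rewrite -addn1 PoszD.
Qed.
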